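(* There exist $\mathrm{x},\mathrm{y}\in T\mathbb{R}^2$ and a path of type RSL in $\Gamma(\mathrm{x},\mathrm{y})$ that is bounded-homotopic in $\Gamma(\mathrm{x},\mathrm{y})$ to a path of type LSR in $\Gamma(\mathrm{x},\mathrm{y})$. (In words: an RSL Dubins path can sometimes be deformed into an LSR Dubins path.)
   Context: Elements of $T\mathbb{R}^2$ are pairs $\mathrm{x}=(x,X)$ with $x\in\mathbb{R}^2$ and $X$ a unit tangent vector. A bounded curvature path from $\mathrm{x}=(x,X)$ to $\mathrm{y}=(y,Y)$ is a $C^1$, piecewise $C^2$ path $\gamma:[0,s]\to\mathbb{R}^2$ parametrized by arc length with $\gamma(0)=x,\gamma'(0)=X,\gamma(s)=y,\gamma'(s)=Y$ and $\|\gamma''\|\le1$ wherever defined; $\Gamma(\mathrm{x},\mathrm{y})$ is the space of these with the $C^1$ metric. A bounded curvature homotopy is a continuous one-parameter family $p\in[0,1]\mapsto\mathcal{H}(p)\in\Gamma(\mathrm{x},\mathrm{y})$ joining two paths; paths so joined are bounded-homotopic. A CSC (Dubins) path is a concatenation of an arc of a unit circle of length less than $2\pi$, a line segment, and an arc of a unit circle of length less than $2\pi$; R denotes a clockwise traversed arc, L a counterclockwise traversed arc, S the segment, so RSL is clockwise arc–segment–counterclockwise arc and LSR is counterclockwise arc–segment–clockwise arc. *)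

From Stdlib Require Import Reals Lra.
Open Scope R_scope.

Definition vec := (R * R)%type.
Definition vsub (u v : vec) : vec := (fst u - fst v, snd u - snd v).
Definition vscale (c : R) (u : vec) : vec := (c * fst u, c * snd u).
Definition vnorm (u : vec) : R := sqrt (fst u ^ 2 + snd u ^ 2).
Definition vdist (u v : vec) : R := vnorm (vsub u v).
Definition unit_vec (u : vec) : Prop := fst u ^ 2 + snd u ^ 2 = 1.

Definition rot (th : R) (u : vec) : vec :=
  (cos th * fst u - sin th * snd u, sin th * fst u + cos th * snd u).

Definition Icc (a b : R) (t : R) : Prop := a <= t <= b.

Definition deriv_within (D : R -> Prop) (f : R -> vec) (t : R) (l : vec) : Prop :=
  forall eps, 0 < eps -> exists delta, 0 < delta /\
    forall u, D u -> u <> t -> Rabs (u - t) < delta ->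
      vdist (vscale (/ (u - t)) (vsub (f u) (f t))) l <= eps.

Definition cont_within (D : R -> Prop) (f : R -> vec) (t : R) : Prop :=
  forall eps, 0 < eps -> exists delta, 0 < delta /\
    forall u, D u -> Rabs (u - t) < delta -> vdist (f u) (f t) < eps.

(* Bounded curvature path from (x,X) to (y,Y): g : [0,s] -> R^2 with
   derivative dg; C^1, arc-length parametrized, piecewise C^2 with
   |g''| <= 1 where defined. *)
Definition bcp (x X y Y : vec) (s : R) (g dg : R -> vec) : Prop :=
  0 < s /\ unit_vec X /\ unit_vec Y /\
  (forall t, Icc 0 s t -> deriv_within (Icc 0 s) g t (dg t)) /\
  (forall t, Icc 0 s t -> cont_within (Icc 0 s) dg t) /\
  (forall t, Icc 0 s t -> vnorm (dg t) = 1) /\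
  g 0 = x /\ dg 0 = X /\ g s = y /\ dg s = Y /\
  exists (k : nat) (tau : nat -> R) (dd : nat -> R -> vec),
    tau 0%nat = 0 /\ tau k = s /\
    (forall i, (i < k)%nat -> tau i < tau (S i)) /\
    (forall i, (i < k)%nat -> forall t, Icc (tau i) (tau (S i)) t ->
        deriv_within (Icc (tau i) (tau (S i))) dg t (dd i t) /\
        cont_within (Icc (tau i) (tau (S i))) (dd i) t /\
        vnorm (dd i t) <= 1).

(* CSC type RSL: clockwise arc (tangent rotates clockwise at unit rate),
   segment (tangent constant), counterclockwise arc. *)
Definition is_RSL (s : R) (dg : R -> vec) : Prop :=
  exists a l b, 0 < a < 2 * PI /\ 0 < l /\ 0 < b < 2 * PI /\ s = a + l + b /\
    (forall t, Icc 0 a t -> dg t = rot (- t) (dg 0)) /\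
    (forall t, Icc a (a + l) t -> dg t = dg a) /\
    (forall t, Icc (a + l) s t -> dg t = rot (t - (a + l)) (dg (a + l))).

Definition is_LSR (s : R) (dg : R -> vec) : Prop :=
  exists a l b, 0 < a < 2 * PI /\ 0 < l /\ 0 < b < 2 * PI /\ s = a + l + b /\
    (forall t, Icc 0 a t -> dg t = rot t (dg 0)) /\
    (forall t, Icc a (a + l) t -> dg t = dg a) /\
    (forall t, Icc (a + l) s t -> dg t = rot (- (t - (a + l))) (dg (a + l))).

(* C^1 metric: paths reparametrized on [0,1], c(t) = g(s t), c'(t) = s dg(s t);
   a homotopy is a family p in [0,1] |-> path in Gamma(x,y), continuous for the
   C^1 (sup) metric, joining path 1 (at p=0) to path 2 (at p=1). *)
Definition bounded_homotopic (x X y Y : vec)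
  (s1 : R) (g1 dg1 : R -> vec) (s2 : R) (g2 dg2 : R -> vec) : Prop :=
  exists (S : R -> R) (G DG : R -> R -> vec),
    (forall p, Icc 0 1 p -> bcp x X y Y (S p) (G p) (DG p)) /\
    (forall p0, Icc 0 1 p0 -> forall eps, 0 < eps -> exists delta, 0 < delta /\
       forall p, Icc 0 1 p -> Rabs (p - p0) < delta -> forall t, Icc 0 1 t ->
         vdist (G p (S p * t)) (G p0 (S p0 * t)) < eps /\
         vdist (vscale (S p) (DG p (S p * t)))
               (vscale (S p0) (DG p0 (S p0 * t))) < eps) /\
    S 0 = s1 /\ (forall t, Icc 0 s1 t -> G 0 t = g1 t /\ DG 0 t = dg1 t) /\
    S 1 = s2 /\ (forall t, Icc 0 s2 t -> G 1 t = g2 t /\ DG 1 t = dg2 t).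

From Stdlib Require Import Reals Lra Lia List.
From Coquelicot Require Import Coquelicot.
Open Scope R_scope.

(* A concatenation of unit arcs and segments is encoded by its list of piece
   types and lengths: the tangent angle is a sum of clamped curvature-times-length
   terms and the path is the integral of the unit tangent.  Such a path is a
   bounded curvature path, and its C^1 distance to a path with the same piece
   types is controlled by the differences of the piece lengths.

   Consider the nine-piece paths R S L S L S L S R whose arc lengths are affine in
   two angles a, b in [0, PI/2] and whose segment lengths solve the closing
   condition, so that along the edges a = PI/2 and b = PI/2 every such path runs
   from ((0,0),(1,0)) to ((-2,0),(1,0)).  At (a, b) = (0, PI/2) only the pieces
   R(3PI/2) S(2) L(3PI/2) have positive length, at (PI/2, 0) only
   L(3PI/2) S(2) R(3PI/2); following the two edges through (PI/2, PI/2) therefore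
   deforms an RSL path into an LSR path. *)

Lemma vdist_le_abs (u v : vec) :
  vdist u v <= Rabs (fst u - fst v) + Rabs (snd u - snd v).
Proof.
  unfold vdist, vnorm, vsub; cbn [fst snd].
  set (a := fst u - fst v); set (b := snd u - snd v).
  pose proof (Rabs_pos a); pose proof (Rabs_pos b).
  rewrite <- (sqrt_pow2 (Rabs a + Rabs b)) by lra.
  apply sqrt_le_1_alt.
  rewrite <- (pow2_abs a), <- (pow2_abs b). nra.
Qed.

Lemma Rabs_cos_le_1 a : Rabs (cos a) <= 1.
Proof. pose proof (COS_bound a). unfold Rabs; destruct Rcase_abs; lra. Qed.

Lemma Rabs_sin_le_1 a : Rabs (sin a) <= 1.
Proof. pose proof (SIN_bound a). unfold Rabs; destruct Rcase_abs; lra. Qed.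

Lemma lipschitz_of_derive_bounded (f df : R -> R) :
  (forall x, is_derive f x (df x)) -> (forall x, Rabs (df x) <= 1) ->
  forall a b, Rabs (f a - f b) <= Rabs (a - b).
Proof.
  intros Hf Hdf a b.
  destruct (MVT_gen f b a df) as [c [_ Hc]].
  - intros x _. apply Hf.
  - intros x _. apply derivable_continuous_pt.
    exists (df x). apply is_derive_Reals, Hf.
  - rewrite Hc, Rabs_mult. pose proof (Hdf c). pose proof (Rabs_pos (a - b)). nra.
Qed.

Lemma cos_lipschitz a b : Rabs (cos a - cos b) <= Rabs (a - b).
Proof.
  apply (lipschitz_of_derive_bounded cos (fun x => - sin x)); [apply is_derive_cos|].
  intros x. rewrite Rabs_Ropp. apply Rabs_sin_le_1.
Qed.

Lemma sin_lipschitz a b : Rabs (sin a - sin b) <= Rabs (a - b).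
Proof.
  apply (lipschitz_of_derive_bounded sin cos); [apply is_derive_sin | apply Rabs_cos_le_1].
Qed.

Lemma deriv_within_pair D f1 f2 t l1 l2 :
  derivable_pt_lim f1 t l1 -> derivable_pt_lim f2 t l2 ->
  deriv_within D (fun u => (f1 u, f2 u)) t (l1, l2).
Proof.
  intros H1 H2 eps Heps.
  destruct (H1 (eps / 2) ltac:(lra)) as [d1 Hd1].
  destruct (H2 (eps / 2) ltac:(lra)) as [d2 Hd2].
  exists (Rmin d1 d2). split; [apply Rmin_pos; apply cond_pos|].
  intros u _ Hne Hlt.
  assert (Hh : u - t <> 0) by lra.
  pose proof (Rmin_l d1 d2); pose proof (Rmin_r d1 d2).
  specialize (Hd1 (u - t) Hh ltac:(lra)).
  specialize (Hd2 (u - t) Hh ltac:(lra)).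
  replace (t + (u - t)) with u in Hd1, Hd2 by ring.
  eapply Rle_trans; [apply vdist_le_abs|]. unfold vscale, vsub; cbn [fst snd].
  unfold Rdiv in Hd1, Hd2.
  rewrite (Rmult_comm (f1 u - f1 t)) in Hd1.
  rewrite (Rmult_comm (f2 u - f2 t)) in Hd2. lra.
Qed.

Lemma deriv_within_ext D f f' t l :
  (forall u, D u -> f u = f' u) -> D t ->
  deriv_within D f' t l -> deriv_within D f t l.
Proof.
  intros Hext Ht H eps Heps. destruct (H eps Heps) as [d [Hd H']].
  exists d; split; [exact Hd|]. intros u Hu Hne Hlt.
  rewrite (Hext u Hu), (Hext t Ht). auto.
Qed.

Lemma lt_of_mul_lt_div K e x : 0 <= K -> 0 <= x -> x < e / (K + 1) -> K * x < e.
Proof.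
  intros HK Hx Hlt.
  apply Rle_lt_trans with ((K + 1) * x); [nra|].
  apply Rmult_lt_reg_r with (/ (K + 1)); [apply Rinv_0_lt_compat; lra|].
  replace ((K + 1) * x * / (K + 1)) with x by (field; lra). exact Hlt.
Qed.

Lemma lipschitz_cont_within D f t K :
  0 <= K -> (forall u, vdist (f u) (f t) <= K * Rabs (u - t)) ->
  cont_within D f t.
Proof.
  intros HK H eps Heps. exists (eps / (K + 1)).
  split; [apply Rdiv_lt_0_compat; lra|].
  intros u _ Hu. eapply Rle_lt_trans; [apply H|].
  apply lt_of_mul_lt_div; auto using Rabs_pos.
Qed.

Lemma lipschitz_continuous (f : R -> R) K x :
  0 <= K -> (forall u, Rabs (f u - f x) <= K * Rabs (u - x)) -> continuous f x.
Proof.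
  intros HK H. apply continuity_pt_filterlim.
  intros eps Heps. exists (eps / (K + 1)).
  split; [apply Rdiv_lt_0_compat; lra|].
  intros u [_ Hu]. unfold dist in Hu; cbn in Hu; unfold R_dist in Hu.
  cbn; unfold R_dist. eapply Rle_lt_trans; [apply H|].
  apply lt_of_mul_lt_div; auto using Rabs_pos.
Qed.

(** * Arcs and segments *)

Inductive turn := TurnL | TurnR | Straight.

Definition curvature (k : turn) : R :=
  match k with TurnL => 1 | TurnR => -1 | Straight => 0 end.

Definition clamp (u d : R) : R := Rmin (Rmax u 0) d.

(* [clamp t d] is the part of the first piece already travelled at arc length [t]. *)
Fixpoint heading (P : list (turn * R)) (t : R) : R :=
  match P with
  | nil => 0
  | (k, d) :: P' => curvature k * clamp t d + heading P' (t - d)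
  end.

Fixpoint total_length (P : list (turn * R)) : R :=
  match P with nil => 0 | (_, d) :: P' => d + total_length P' end.

Fixpoint total_turn (P : list (turn * R)) : R :=
  match P with nil => 0 | (k, d) :: P' => curvature k * d + total_turn P' end.

Fixpoint length_dist (P Q : list (turn * R)) : R :=
  match P, Q with
  | (_, d) :: P', (_, d') :: Q' => Rabs (d - d') + length_dist P' Q'
  | _, _ => 0
  end.

Definition nonneg_lengths (P : list (turn * R)) : Prop :=
  List.Forall (fun kd => 0 <= snd kd) P.

Lemma Rabs_curvature_le_1 k : Rabs (curvature k) <= 1.
Proof. destruct k; cbn; unfold Rabs; destruct Rcase_abs; lra. Qed.

Lemma clamp_lipschitz u u' d d' :
  Rabs (clamp u d - clamp u' d') <= Rabs (u - u') + Rabs (d - d').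
Proof.
  unfold clamp, Rmin, Rmax.
  repeat destruct Rle_dec; unfold Rabs; repeat destruct Rcase_abs; lra.
Qed.

Lemma length_dist_ge0 P Q : 0 <= length_dist P Q.
Proof.
  revert Q; induction P as [|[k d] P IH]; intros [|[k' d'] Q]; cbn; try lra.
  pose proof (Rabs_pos (d - d')); pose proof (IH Q); lra.
Qed.

Lemma length_dist_refl P : length_dist P P = 0.
Proof.
  induction P as [|[k d] P IH]; cbn; [reflexivity|].
  rewrite Rminus_diag, Rabs_R0, IH; ring.
Qed.

Lemma total_length_dist P Q :
  map fst P = map fst Q -> Rabs (total_length P - total_length Q) <= length_dist P Q.
Proof.
  revert Q; induction P as [|[k d] P IH]; intros [|[k' d'] Q] H;
    cbn [total_length length_dist map] in *; try discriminate.
  - rewrite Rminus_0_r, Rabs_R0; lra.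
  - injection H as _ H. specialize (IH Q H).
    replace (d + total_length P - (d' + total_length Q))
      with ((d - d') + (total_length P - total_length Q)) by ring.
    eapply Rle_trans; [apply Rabs_triang|]. lra.
Qed.

Lemma heading_dist P Q t t' : map fst P = map fst Q ->
  Rabs (heading P t - heading Q t')
  <= INR (length P) * (Rabs (t - t') + length_dist P Q).
Proof.
  revert Q t t'; induction P as [|[k d] P IH]; intros [|[k' d'] Q] t t' HPQ;
    cbn [heading length_dist length map fst] in *; try discriminate.
  { rewrite Rminus_0_r, Rabs_R0; cbn; lra. }
  injection HPQ as -> HPQ.
  specialize (IH Q (t - d) (t' - d') HPQ).
  set (e := Rabs (t - t') + Rabs (d - d')).
  assert (Hfirst : Rabs (curvature k' * clamp t d - curvature k' * clamp t' d') <= e).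
  { rewrite <- Rmult_minus_distr_l, Rabs_mult.
    pose proof (clamp_lipschitz t t' d d'). pose proof (Rabs_curvature_le_1 k').
    pose proof (Rabs_pos (clamp t d - clamp t' d')). unfold e. nra. }
  assert (Hshift : Rabs (t - d - (t' - d')) <= e).
  { replace (t - d - (t' - d')) with ((t - t') + - (d - d')) by ring.
    eapply Rle_trans; [apply Rabs_triang|]. rewrite Rabs_Ropp. unfold e. lra. }
  replace (curvature k' * clamp t d + heading P (t - d)
           - (curvature k' * clamp t' d' + heading Q (t' - d')))
    with ((curvature k' * clamp t d - curvature k' * clamp t' d')
          + (heading P (t - d) - heading Q (t' - d'))) by ring.
  eapply Rle_trans; [apply Rabs_triang|].
  assert (Hrest : INR (length P) * (Rabs (t - d - (t' - d')) + length_dist P Q)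
                  <= INR (length P) * (e + length_dist P Q)).
  { apply Rmult_le_compat_l; [apply pos_INR | lra]. }
  rewrite S_INR. unfold e in *.
  pose proof (pos_INR (length P)). pose proof (length_dist_ge0 P Q).
  pose proof (Rabs_pos (t - t')). pose proof (Rabs_pos (d - d')). nra.
Qed.

Lemma heading_lipschitz P t t' :
  Rabs (heading P t - heading P t') <= INR (length P) * Rabs (t - t').
Proof.
  pose proof (heading_dist P P t t' eq_refl) as H.
  rewrite length_dist_refl, Rplus_0_r in H. exact H.
Qed.

Lemma heading_nonpos P t : nonneg_lengths P -> t <= 0 -> heading P t = 0.
Proof.
  revert t; induction P as [|[k d] P IH]; intros t HP Ht; cbn; [reflexivity|].
  inversion HP as [|? ? Hd HP']; subst; cbn in Hd.
  rewrite IH by (auto; lra).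
  unfold clamp, Rmax, Rmin. repeat destruct Rle_dec; lra.
Qed.

Lemma heading_cons_in k d P t :
  nonneg_lengths P -> 0 <= t <= d -> heading ((k, d) :: P) t = curvature k * t.
Proof.
  intros HP Ht; cbn. rewrite heading_nonpos by (auto; lra).
  unfold clamp, Rmax, Rmin. repeat destruct Rle_dec; try lra.
  all: try (replace t with 0 by lra); ring.
Qed.

Lemma heading_cons_ge k d P t :
  0 <= d -> d <= t -> heading ((k, d) :: P) t = curvature k * d + heading P (t - d).
Proof.
  intros Hd Ht; cbn. do 2 f_equal.
  unfold clamp, Rmax, Rmin. repeat destruct Rle_dec; lra.
Qed.

Lemma total_length_ge0 P : nonneg_lengths P -> 0 <= total_length P.
Proof. induction 1 as [|[k d] P Hd HP IH]; cbn in *; lra. Qed.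

Lemma heading_after_end P t :
  nonneg_lengths P -> total_length P <= t -> heading P t = total_turn P.
Proof.
  revert t; induction P as [|[k d] P IH]; intros t HP Ht; cbn in *; [reflexivity|].
  inversion HP as [|? ? Hd HP']; subst; cbn in Hd.
  pose proof (total_length_ge0 P HP').
  rewrite IH by (auto; lra). do 2 f_equal.
  unfold clamp, Rmax, Rmin. repeat destruct Rle_dec; lra.
Qed.

(** * Integrating the unit tangent *)

Lemma RInt_shift (f : R -> R) a T :
  ex_RInt f a (a + T) -> RInt f a (a + T) = RInt (fun v => f (v + a)) 0 T.
Proof.
  intros Hex.
  assert (E := RInt_comp_lin f 1 a 0 T).
  replace (1 * 0 + a) with a in E by ring.
  replace (1 * T + a) with (a + T) in E by ring.
  rewrite <- (E Hex). apply RInt_ext. intros x _.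
  unfold scal; cbn; unfold mult; cbn. rewrite Rmult_1_l. f_equal. ring.
Qed.

Section Integrals.

(* [phi] is [cos] or [sin], with antiderivative [Phi]. *)
Variables Phi phi : R -> R.
Hypothesis Phi_derive : forall x, is_derive Phi x (phi x).
Hypothesis phi_lipschitz : forall a b, Rabs (phi a - phi b) <= Rabs (a - b).
Hypothesis phi_bounded : forall a, Rabs (phi a) <= 1.

Lemma continuous_phi_comp g K x :
  0 <= K -> (forall u, Rabs (g u - g x) <= K * Rabs (u - x)) ->
  continuous (fun u => phi (g u)) x.
Proof.
  intros HK Hg. apply (lipschitz_continuous _ K); [exact HK|].
  intros u. eapply Rle_trans; [apply phi_lipschitz | apply Hg].
Qed.

Lemma ex_RInt_phi_heading h P a b : ex_RInt (fun u => phi (h + heading P u)) a b.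
Proof.
  apply (ex_RInt_continuous (V := R_CompleteNormedModule)). intros x _.
  apply (continuous_phi_comp _ (INR (length P))); [apply pos_INR|]. intros u.
  replace (h + heading P u - (h + heading P x)) with (heading P u - heading P x) by ring.
  apply heading_lipschitz.
Qed.

Lemma ex_RInt_phi_heading0 P a b : ex_RInt (fun u => phi (heading P u)) a b.
Proof.
  apply (ex_RInt_ext (fun u => phi (0 + heading P u))).
  - intros x _. rewrite Rplus_0_l. reflexivity.
  - apply ex_RInt_phi_heading.
Qed.

Lemma RInt_phi_affine h c d : c <> 0 ->
  RInt (fun u => phi (h + c * u)) 0 d = (Phi (h + c * d) - Phi h) / c :> R.
Proof.
  intros Hc. apply is_RInt_unique.
  replace ((Phi (h + c * d) - Phi h) / c)
    with (Phi (h + c * d) / c - Phi (h + c * 0) / c)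
    by (rewrite Rmult_0_r, Rplus_0_r; field; exact Hc).
  change (Phi (h + c * d) / c - Phi (h + c * 0) / c)
    with (minus (Phi (h + c * d) / c) (Phi (h + c * 0) / c)).
  apply (is_RInt_derive (fun u => Phi (h + c * u) / c)).
  - intros x _.
    assert (Hin : is_derive (fun u => h + c * u) x c).
    { auto_derive; [exact I | ring]. }
    pose proof (is_derive_comp Phi (fun u => h + c * u) x _ c (Phi_derive _) Hin) as Hcomp.
    pose proof (is_derive_scal_l _ x _ (/ c) Hcomp) as Hdiv.
    unfold scal in Hdiv; cbn in Hdiv; unfold mult in Hdiv; cbn in Hdiv.
    replace (phi (h + c * x)) with (c * phi (h + c * x) * / c) by (field; exact Hc).
    exact Hdiv.
  - intros x _. apply (continuous_phi_comp _ (Rabs c)); [apply Rabs_pos|].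
    intros u. replace (h + c * u - (h + c * x)) with (c * (u - x)) by ring.
    rewrite Rabs_mult. lra.
Qed.

Definition piece_integral (h : R) (k : turn) (d : R) : R :=
  match k with
  | TurnL => Phi (h + d) - Phi h
  | TurnR => Phi h - Phi (h - d)
  | Straight => d * phi h
  end.

Lemma RInt_phi_piece h k d :
  RInt (fun u => phi (h + curvature k * u)) 0 d = piece_integral h k d :> R.
Proof.
  destruct k; cbn [curvature piece_integral].
  - rewrite RInt_phi_affine by lra. rewrite Rmult_1_l. field.
  - rewrite RInt_phi_affine by lra. replace (h + -1 * d) with (h - d) by ring. field.
  - rewrite (RInt_ext _ (fun _ => phi h)) by (intros x _; f_equal; ring).
    rewrite RInt_const. unfold scal; cbn; unfold mult; cbn. ring.
Qed.

Fixpoint displacement (h : R) (P : list (turn * R)) : R :=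
  match P with
  | nil => 0
  | (k, d) :: P' => piece_integral h k d + displacement (h + curvature k * d) P'
  end.

Lemma RInt_phi_heading h P : nonneg_lengths P ->
  RInt (fun u => phi (h + heading P u)) 0 (total_length P) = displacement h P.
Proof.
  revert h; induction P as [|[k d] P IH]; intros h HP.
  { apply (RInt_point (V := R_CompleteNormedModule)). }
  inversion HP as [|? ? Hd HP']; subst; cbn in Hd.
  pose proof (total_length_ge0 P HP').
  cbn [total_length displacement].
  rewrite <- (RInt_Chasles _ 0 d (d + total_length P)) by apply ex_RInt_phi_heading.
  change plus with Rplus. f_equal.
  - rewrite <- RInt_phi_piece. apply RInt_ext.
    intros x Hx. rewrite Rmin_left in Hx by lra. rewrite Rmax_right in Hx by lra.
    rewrite heading_cons_in by (auto; lra). reflexivity.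
  - rewrite RInt_shift by apply ex_RInt_phi_heading.
    rewrite <- IH by exact HP'. apply RInt_ext.
    intros x Hx. rewrite Rmin_left in Hx by lra. rewrite Rmax_right in Hx by lra.
    rewrite heading_cons_ge by lra. f_equal.
    replace (x + d - d) with x by ring. ring.
Qed.

Lemma RInt_phi_heading_le P a b :
  Rabs (RInt (fun u => phi (heading P u)) a b) <= Rabs (b - a).
Proof.
  assert (Hle : forall a b, a <= b ->
            Rabs (RInt (fun u => phi (heading P u)) a b) <= b - a).
  { intros a' b' Hab. rewrite <- (Rmult_1_r (b' - a')).
    apply abs_RInt_le_const; [exact Hab | apply ex_RInt_phi_heading0 | intros; apply phi_bounded]. }
  destruct (Rle_dec a b) as [Hab|Hab].
  - rewrite (Rabs_right (b - a)) by lra. exact (Hle a b Hab).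
  - rewrite <- (opp_RInt_swap _ b a) by apply ex_RInt_phi_heading0.
    change opp with Ropp. rewrite Rabs_Ropp, (Rabs_left (b - a)) by lra.
    pose proof (Hle b a ltac:(lra)). lra.
Qed.

Lemma RInt_phi_heading_dist P Q u v : map fst P = map fst Q -> 0 <= v ->
  Rabs (RInt (fun w => phi (heading P w)) 0 u - RInt (fun w => phi (heading Q w)) 0 v)
  <= Rabs (u - v) + v * (INR (length P) * length_dist P Q).
Proof.
  intros HPQ Hv.
  set (IP := fun a b => RInt (fun w => phi (heading P w)) a b).
  set (IQ := RInt (fun w => phi (heading Q w)) 0 v).
  assert (Hsplit : IP 0 u = IP 0 v + IP v u).
  { symmetry. apply (RInt_Chasles (V := R_CompleteNormedModule));
      apply ex_RInt_phi_heading0. }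
  assert (Hdiff : IP 0 v - IQ = RInt (fun w => phi (heading P w) - phi (heading Q w)) 0 v).
  { symmetry. apply (RInt_minus (V := R_CompleteNormedModule));
      apply ex_RInt_phi_heading0. }
  assert (Hbound : Rabs (IP 0 v - IQ) <= v * (INR (length P) * length_dist P Q)).
  { rewrite Hdiff. eapply Rle_trans.
    - apply (abs_RInt_le_const _ 0 v (INR (length P) * length_dist P Q)); [exact Hv| |].
      + apply (ex_RInt_minus (V := R_CompleteNormedModule)); apply ex_RInt_phi_heading0.
      + intros w _. eapply Rle_trans; [apply phi_lipschitz|].
        eapply Rle_trans; [apply heading_dist, HPQ|].
        rewrite Rminus_diag, Rabs_R0, Rplus_0_l. apply Rle_refl.
    - rewrite Rminus_0_r. apply Rle_refl. }
  change (Rabs (IP 0 u - IQ) <= Rabs (u - v) + v * (INR (length P) * length_dist P Q)).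
  rewrite Hsplit.
  replace (IP 0 v + IP v u - IQ) with (IP v u + (IP 0 v - IQ)) by ring.
  eapply Rle_trans; [apply Rabs_triang|].
  apply Rplus_le_compat; [apply RInt_phi_heading_le | exact Hbound].
Qed.

Lemma scaled_phi_heading_dist P Q u v : map fst P = map fst Q -> 0 <= total_length Q ->
  Rabs (total_length P * phi (heading P u) - total_length Q * phi (heading Q v))
  <= length_dist P Q + total_length Q * (INR (length P) * (Rabs (u - v) + length_dist P Q)).
Proof.
  intros HPQ HQ.
  replace (total_length P * phi (heading P u) - total_length Q * phi (heading Q v))
    with ((total_length P - total_length Q) * phi (heading P u)
          + total_length Q * (phi (heading P u) - phi (heading Q v))) by ring.
  eapply Rle_trans; [apply Rabs_triang|]. rewrite !Rabs_mult.
  apply Rplus_le_compat.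
  - pose proof (total_length_dist P Q HPQ). pose proof (phi_bounded (heading P u)).
    pose proof (Rabs_pos (total_length P - total_length Q)).
    pose proof (Rabs_pos (phi (heading P u))). nra.
  - rewrite (Rabs_right (total_length Q)) by lra. apply Rmult_le_compat_l; [exact HQ|].
    eapply Rle_trans; [apply phi_lipschitz | apply heading_dist, HPQ].
Qed.

End Integrals.

Definition path (P : list (turn * R)) (t : R) : vec :=
  (RInt (fun u => cos (heading P u)) 0 t, RInt (fun u => sin (heading P u)) 0 t).

Definition tangent (P : list (turn * R)) (t : R) : vec :=
  (cos (heading P t), sin (heading P t)).

Definition endpoint (P : list (turn * R)) : vec :=
  (displacement sin cos 0 P, displacement (fun x => - cos x) sin 0 P).

Lemma is_derive_neg_cos x : is_derive (fun y => - cos y) x (sin x).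
Proof. auto_derive; [exact I | ring]. Qed.

Lemma path_deriv D P t : deriv_within D (path P) t (tangent P t).
Proof.
  assert (Hprim : forall phi : R -> R, (forall x, continuous phi x) ->
            derivable_pt_lim (fun s => RInt phi 0 s) t (phi t)).
  { intros phi Hc. apply is_derive_Reals, (is_derive_RInt phi (RInt phi 0) 0 t).
    - apply filter_forall. intros b. apply (RInt_correct (V := R_CompleteNormedModule)).
      apply (ex_RInt_continuous (V := R_CompleteNormedModule)). intros; apply Hc.
    - apply Hc. }
  apply deriv_within_pair; apply Hprim; intros x.
  - apply (continuous_phi_comp cos cos_lipschitz _ (INR (length P)));
      auto using pos_INR, heading_lipschitz.
  - apply (continuous_phi_comp sin sin_lipschitz _ (INR (length P)));
      auto using pos_INR, heading_lipschitz.
Qed.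

Lemma tangent_lipschitz P u t :
  vdist (tangent P u) (tangent P t) <= 2 * INR (length P) * Rabs (u - t).
Proof.
  eapply Rle_trans; [apply vdist_le_abs|]. unfold tangent; cbn [fst snd].
  pose proof (cos_lipschitz (heading P u) (heading P t)).
  pose proof (sin_lipschitz (heading P u) (heading P t)).
  pose proof (heading_lipschitz P u t). lra.
Qed.

Lemma vnorm_tangent P t : vnorm (tangent P t) = 1.
Proof.
  unfold tangent, vnorm; cbn [fst snd]. rewrite <- sqrt_1. f_equal.
  pose proof (sin2_cos2 (heading P t)). unfold Rsqr in *. nra.
Qed.

Lemma path_endpoint P :
  nonneg_lengths P -> path P (total_length P) = endpoint P.
Proof.
  intros HP. unfold path, endpoint. f_equal.
  - rewrite <- (RInt_phi_heading sin cos); auto using is_derive_sin, cos_lipschitz, Rabs_cos_le_1.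
    apply RInt_ext. intros; rewrite Rplus_0_l; reflexivity.
  - rewrite <- (RInt_phi_heading (fun x => - cos x) sin);
      auto using is_derive_neg_cos, sin_lipschitz, Rabs_sin_le_1.
    apply RInt_ext. intros; rewrite Rplus_0_l; reflexivity.
Qed.

Definition positive_length (kd : turn * R) : bool :=
  if Rlt_dec 0 (snd kd) then true else false.

Definition drop_empty (P : list (turn * R)) : list (turn * R) :=
  filter positive_length P.

Lemma heading_drop_empty P t : nonneg_lengths P -> heading (drop_empty P) t = heading P t.
Proof.
  revert t; induction P as [|[k d] P IH]; intros t HP; cbn; [reflexivity|].
  inversion HP as [|? ? Hd HP']; subst; cbn in Hd.
  unfold positive_length; cbn. destruct Rlt_dec.
  - cbn. rewrite IH by exact HP'. reflexivity.
  - assert (d = 0) by lra. subst. rewrite IH, Rminus_0_r by exact HP'.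
    unfold clamp, Rmin, Rmax. repeat destruct Rle_dec; lra.
Qed.

Lemma total_length_drop_empty P :
  nonneg_lengths P -> total_length (drop_empty P) = total_length P.
Proof.
  unfold drop_empty.
  induction P as [|[k d] P IH]; intros HP; cbn [filter]; [reflexivity|].
  inversion HP as [|? ? Hd HP']; subst; cbn in Hd.
  unfold positive_length at 1; cbn [snd].
  destruct Rlt_dec; cbn [total_length]; rewrite IH by exact HP'; lra.
Qed.

Lemma drop_empty_pos P : List.Forall (fun kd => 0 < snd kd) (drop_empty P).
Proof.
  induction P as [|[k d] P IH]; cbn; [constructor|].
  unfold positive_length; cbn. destruct Rlt_dec; auto.
Qed.

Definition breakpoint (F : list (turn * R)) (i : nat) : R := total_length (firstn i F).

Lemma breakpoint_ge0 F i : nonneg_lengths F -> 0 <= breakpoint F i.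
Proof.
  intros HF. apply total_length_ge0.
  unfold nonneg_lengths in *. rewrite <- (firstn_skipn i F) in HF.
  apply List.Forall_app in HF. apply HF.
Qed.

Lemma breakpoint_S F i : (i < length F)%nat ->
  breakpoint F (S i) = breakpoint F i + snd (nth i F (Straight, 0)).
Proof.
  unfold breakpoint. revert i; induction F as [|[k d] F IH]; intros [|i] Hi;
    cbn in *; try lia.
  - ring.
  - rewrite IH by lia. ring.
Qed.

Lemma heading_on_piece F i t : nonneg_lengths F -> (i < length F)%nat ->
  breakpoint F i <= t <= breakpoint F (S i) ->
  heading F t = heading F (breakpoint F i)
                + curvature (fst (nth i F (Straight, 0))) * (t - breakpoint F i).
Proof.
  revert i t; induction F as [|[k d] F IH]; intros [|i] t HF Hi Ht; cbn in Hi; try lia;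
    inversion HF as [|? ? Hd HF']; subst; cbn in Hd.
  - unfold breakpoint in *; cbn [firstn total_length nth fst] in *.
    rewrite !heading_cons_in by (auto; lra). ring.
  - pose proof (breakpoint_ge0 F i HF').
    unfold breakpoint in *. cbn [firstn total_length nth fst] in *.
    rewrite (heading_cons_ge k d F t), (heading_cons_ge k d F (d + _)) by lra.
    replace (d + total_length (firstn i F) - d) with (total_length (firstn i F)) by ring.
    rewrite (IH i (t - d)) by (auto; lia || (unfold breakpoint; cbn [firstn total_length]; lra)).
    unfold breakpoint. ring.
Qed.

Definition acceleration (c : R) (P : list (turn * R)) (t : R) : vec :=
  (- c * sin (heading P t), c * cos (heading P t)).

Lemma vnorm_acceleration c P t : vnorm (acceleration c P t) = Rabs c.
Proof.
  unfold acceleration, vnorm; cbn [fst snd]. rewrite <- sqrt_Rsqr_abs. f_equal.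
  pose proof (sin2_cos2 (heading P t)). unfold Rsqr in *. nra.
Qed.

Lemma acceleration_lipschitz c P u t : Rabs c <= 1 ->
  vdist (acceleration c P u) (acceleration c P t) <= 2 * INR (length P) * Rabs (u - t).
Proof.
  intros Hc. eapply Rle_trans; [apply vdist_le_abs|]. unfold acceleration; cbn [fst snd].
  replace (- c * sin (heading P u) - - c * sin (heading P t))
    with (- c * (sin (heading P u) - sin (heading P t))) by ring.
  replace (c * cos (heading P u) - c * cos (heading P t))
    with (c * (cos (heading P u) - cos (heading P t))) by ring.
  rewrite !Rabs_mult, Rabs_Ropp.
  pose proof (cos_lipschitz (heading P u) (heading P t)).
  pose proof (sin_lipschitz (heading P u) (heading P t)).
  pose proof (heading_lipschitz P u t).
  pose proof (Rabs_pos (sin (heading P u) - sin (heading P t))).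
  pose proof (Rabs_pos (cos (heading P u) - cos (heading P t))).
  pose proof (Rabs_pos c). nra.
Qed.

Lemma tangent_deriv_affine D P A c t0 t :
  (forall u, D u -> heading P u = A + c * (u - t0)) -> D t ->
  deriv_within D (tangent P) t (acceleration c P t).
Proof.
  intros Haff Ht.
  apply (deriv_within_ext _ _ (fun u => (cos (A + c * (u - t0)), sin (A + c * (u - t0))))).
  - intros u Hu. unfold tangent. rewrite Haff by exact Hu. reflexivity.
  - exact Ht.
  - unfold acceleration. rewrite (Haff t Ht).
    apply deriv_within_pair; apply is_derive_Reals; auto_derive; auto;
      rewrite <- Rminus_def; ring.
Qed.

Lemma tangent_piecewise_C2 P : nonneg_lengths P ->
  exists (k : nat) (tau : nat -> R) (dd : nat -> R -> vec),
    tau 0%nat = 0 /\ tau k = total_length P /\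
    (forall i, (i < k)%nat -> tau i < tau (S i)) /\
    (forall i, (i < k)%nat -> forall t, Icc (tau i) (tau (S i)) t ->
        deriv_within (Icc (tau i) (tau (S i))) (tangent P) t (dd i t) /\
        cont_within (Icc (tau i) (tau (S i))) (dd i) t /\
        vnorm (dd i t) <= 1).
Proof.
  intros HP.
  set (F := drop_empty P).
  pose proof (drop_empty_pos P) as HFpos. fold F in HFpos.
  assert (HF : nonneg_lengths F).
  { eapply List.Forall_impl; [|exact HFpos]. intros kd; cbn; lra. }
  set (c := fun i => curvature (fst (nth i F (Straight, 0)))).
  assert (Hc : forall i, Rabs (c i) <= 1) by (intros; apply Rabs_curvature_le_1).
  exists (length F), (breakpoint F), (fun i => acceleration (c i) P).
  split; [reflexivity|].
  split; [unfold breakpoint; rewrite firstn_all; apply total_length_drop_empty, HP|].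
  split.
  { intros i Hi. rewrite breakpoint_S by exact Hi.
    rewrite List.Forall_forall in HFpos.
    pose proof (HFpos _ (nth_In F (Straight, 0) Hi)). lra. }
  intros i Hi t Ht.
  split; [|split].
  - apply (tangent_deriv_affine _ _ (heading F (breakpoint F i)) _ (breakpoint F i));
      [|exact Ht].
    intros u Hu. rewrite <- heading_drop_empty by exact HP.
    apply heading_on_piece; auto.
  - apply (lipschitz_cont_within _ _ _ (2 * INR (length P)));
      [pose proof (pos_INR (length P)); lra|].
    intros u. apply acceleration_lipschitz, Hc.
  - rewrite vnorm_acceleration. apply Hc.
Qed.

Lemma bcp_path P :
  nonneg_lengths P -> 0 < total_length P -> total_turn P = 0 ->
  bcp (0, 0) (1, 0) (endpoint P) (1, 0) (total_length P) (path P) (tangent P).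
Proof.
  intros HP Hlen Hturn.
  assert (Hunit : unit_vec (1, 0)) by (unfold unit_vec; cbn; ring).
  assert (Htan0 : forall t, t <= 0 -> tangent P t = (1, 0)).
  { intros t Ht. unfold tangent. rewrite heading_nonpos, cos_0, sin_0 by auto.
    reflexivity. }
  repeat split; auto.
  - intros t _. apply path_deriv.
  - intros t _. apply (lipschitz_cont_within _ _ _ (2 * INR (length P)));
      [pose proof (pos_INR (length P)); lra | intros u; apply tangent_lipschitz].
  - intros t _. apply vnorm_tangent.
  - unfold path. f_equal; apply (RInt_point (V := R_CompleteNormedModule)).
  - apply Htan0, Rle_refl.
  - apply path_endpoint, HP.
  - unfold tangent. rewrite heading_after_end, Hturn, cos_0, sin_0 by (auto; lra).
    reflexivity.
  - apply tangent_piecewise_C2, HP.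
Qed.

Lemma path_C1_dist P Q t :
  map fst P = map fst Q -> nonneg_lengths P -> nonneg_lengths Q -> 0 <= t <= 1 ->
  let C := 2 * (1 + 2 * INR (length P) * total_length Q) in
  vdist (path P (total_length P * t)) (path Q (total_length Q * t))
    <= C * length_dist P Q /\
  vdist (vscale (total_length P) (tangent P (total_length P * t)))
        (vscale (total_length Q) (tangent Q (total_length Q * t)))
    <= C * length_dist P Q.
Proof.
  intros HPQ HP HQ Ht C.
  pose proof (total_length_ge0 P HP). pose proof (total_length_ge0 Q HQ) as HLQ.
  pose proof (total_length_dist P Q HPQ). pose proof (length_dist_ge0 P Q).
  set (n := INR (length P)) in *. assert (0 <= n) by apply pos_INR.
  set (LP := total_length P) in *. set (LQ := total_length Q) in *.
  set (d := length_dist P Q) in *.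
  assert (Hu : Rabs (LP * t - LQ * t) <= d).
  { replace (LP * t - LQ * t) with ((LP - LQ) * t) by ring.
    rewrite Rabs_mult, (Rabs_right t) by lra.
    pose proof (Rabs_pos (LP - LQ)). nra. }
  assert (Hv : 0 <= LQ * t <= LQ) by nra.
  assert (Hpos : 0 <= LQ * (n * d)) by (apply Rmult_le_pos; [|apply Rmult_le_pos]; lra).
  split.
  - eapply Rle_trans; [apply vdist_le_abs|]. unfold path; cbn [fst snd].
    pose proof (RInt_phi_heading_dist cos cos_lipschitz Rabs_cos_le_1
                  P Q (LP * t) (LQ * t) HPQ ltac:(lra)) as E1.
    pose proof (RInt_phi_heading_dist sin sin_lipschitz Rabs_sin_le_1
                  P Q (LP * t) (LQ * t) HPQ ltac:(lra)) as E2.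
    fold n d in E1, E2.
    assert (LQ * t * (n * d) <= LQ * (n * d)) by (apply Rmult_le_compat_r; nra).
    unfold C. nra.
  - eapply Rle_trans; [apply vdist_le_abs|]. unfold tangent, vscale; cbn [fst snd].
    pose proof (scaled_phi_heading_dist cos cos_lipschitz Rabs_cos_le_1
                  P Q (LP * t) (LQ * t) HPQ HLQ) as E1.
    pose proof (scaled_phi_heading_dist sin sin_lipschitz Rabs_sin_le_1
                  P Q (LP * t) (LQ * t) HPQ HLQ) as E2.
    fold n d LP LQ in E1, E2.
    assert (LQ * (n * (Rabs (LP * t - LQ * t) + d)) <= LQ * (n * (2 * d))).
    { apply Rmult_le_compat_l; [lra|]. apply Rmult_le_compat_l; lra. }
    unfold C. nra.
Qed.

(** * The deformation *)

Lemma displacement_TurnR Phi phi h d h' P : h' = h - d ->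
  displacement Phi phi h ((TurnR, d) :: P) = Phi h - Phi h' + displacement Phi phi h' P.
Proof. intros ->. cbn. replace (h + -1 * d) with (h - d) by ring. reflexivity. Qed.

Lemma displacement_TurnL Phi phi h d h' P : h' = h + d ->
  displacement Phi phi h ((TurnL, d) :: P) = Phi h' - Phi h + displacement Phi phi h' P.
Proof. intros ->. cbn. replace (h + 1 * d) with (h + d) by ring. reflexivity. Qed.

Lemma displacement_Straight Phi phi h d P :
  displacement Phi phi h ((Straight, d) :: P) = d * phi h + displacement Phi phi h P.
Proof. cbn. replace (h + 0 * d) with h by ring. reflexivity. Qed.

(* Segment lengths solving the closing condition along the edges a = PI/2 and
   b = PI/2 (see [endpoint_family_at_l] and [endpoint_family_at_r]). *)
Definition outer_seg (q : R) : R := 2 * (1 + cos q - 2 * cos q ^ 2) / (1 + sin q).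
Definition inner_seg (q : R) : R := 2 * cos q * (1 + 2 * sin q) / (1 + sin q).

Definition family_at (a b : R) : list (turn * R) :=
  (TurnR, PI/2 - a + 2*b) :: (Straight, outer_seg a + outer_seg b - 1) ::
  (TurnL, a + b - PI/2) :: (Straight, inner_seg a) ::
  (TurnL, 2*PI - a - b) :: (Straight, inner_seg b) ::
  (TurnL, a + b - PI/2) :: (Straight, outer_seg a + outer_seg b - 1) ::
  (TurnR, PI/2 - b + 2*a) :: nil.

Lemma outer_seg_PI2 : outer_seg (PI/2) = 1.
Proof. unfold outer_seg. rewrite cos_PI2, sin_PI2. field. Qed.

Lemma inner_seg_PI2 : inner_seg (PI/2) = 0.
Proof. unfold inner_seg. rewrite cos_PI2, sin_PI2. field. Qed.

Lemma outer_seg_ge0 q : 0 <= q <= PI/2 -> 0 <= outer_seg q.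
Proof.
  intros Hq. unfold outer_seg.
  assert (0 <= sin q) by (apply sin_ge_0; lra).
  assert (0 <= cos q) by (apply cos_ge_0; lra).
  pose proof (COS_bound q).
  apply Rmult_le_pos; [nra|]. left. apply Rinv_0_lt_compat. lra.
Qed.

Lemma inner_seg_ge0 q : 0 <= q <= PI/2 -> 0 <= inner_seg q.
Proof.
  intros Hq. unfold inner_seg.
  assert (0 <= sin q) by (apply sin_ge_0; lra).
  assert (0 <= cos q) by (apply cos_ge_0; lra).
  apply Rmult_le_pos; [nra|]. left. apply Rinv_0_lt_compat. lra.
Qed.

Lemma cos_sub_3PI2 x : cos (x - 3 * (PI/2)) = - sin x.
Proof. rewrite cos_minus, cos_3PI2, sin_3PI2. ring. Qed.
Lemma sin_sub_3PI2 x : sin (x - 3 * (PI/2)) = cos x.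
Proof. rewrite sin_minus, cos_3PI2, sin_3PI2. ring. Qed.
Lemma cos_3PI2_sub x : cos (3 * (PI/2) - x) = - sin x.
Proof. rewrite cos_minus, cos_3PI2, sin_3PI2. ring. Qed.
Lemma sin_3PI2_sub x : sin (3 * (PI/2) - x) = - cos x.
Proof. rewrite sin_minus, cos_3PI2, sin_3PI2. ring. Qed.

Lemma endpoint_family_at_l q : 0 <= q <= PI/2 -> endpoint (family_at q (PI/2)) = (-2, 0).
Proof.
  intros Hq. unfold endpoint, family_at. rewrite outer_seg_PI2, inner_seg_PI2.
  assert (1 + sin q <> 0) by (pose proof (sin_ge_0 q ltac:(lra) ltac:(lra)); lra).
  assert (Hsq : sin q ^ 2 = 1 - cos q ^ 2)
    by (pose proof (sin2_cos2 q); unfold Rsqr in *; nra).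
  f_equal;
    rewrite (displacement_TurnR _ _ _ _ (q - 3*(PI/2))), displacement_Straight,
      (displacement_TurnL _ _ _ _ (2*q - 3*(PI/2))), displacement_Straight,
      (displacement_TurnL _ _ _ _ q), displacement_Straight,
      (displacement_TurnL _ _ _ _ (2*q)), displacement_Straight,
      (displacement_TurnR _ _ _ _ 0) by lra;
    cbn [displacement];
    rewrite ?cos_sub_3PI2, ?sin_sub_3PI2, ?sin_0, ?cos_0, ?sin_2a, ?cos_2a_cos;
    unfold outer_seg, inner_seg; field_simplify_eq; auto; rewrite ?Hsq; ring.
Qed.

Lemma endpoint_family_at_r q : 0 <= q <= PI/2 -> endpoint (family_at (PI/2) q) = (-2, 0).
Proof.
  intros Hq. unfold endpoint, family_at. rewrite outer_seg_PI2, inner_seg_PI2.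
  assert (1 + sin q <> 0) by (pose proof (sin_ge_0 q ltac:(lra) ltac:(lra)); lra).
  assert (Hsq : sin q ^ 2 = 1 - cos q ^ 2)
    by (pose proof (sin2_cos2 q); unfold Rsqr in *; nra).
  f_equal;
    rewrite (displacement_TurnR _ _ _ _ (-(2*q))), displacement_Straight,
      (displacement_TurnL _ _ _ _ (-q)), displacement_Straight,
      (displacement_TurnL _ _ _ _ (3*(PI/2) - 2*q)), displacement_Straight,
      (displacement_TurnL _ _ _ _ (3*(PI/2) - q)), displacement_Straight,
      (displacement_TurnR _ _ _ _ 0) by lra;
    cbn [displacement];
    rewrite ?cos_3PI2_sub, ?sin_3PI2_sub, ?cos_neg, ?sin_neg, ?sin_0, ?cos_0,
      ?sin_2a, ?cos_2a_cos;
    unfold outer_seg, inner_seg; field_simplify_eq; auto; rewrite ?Hsq; ring.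
Qed.

Definition angle_l (p : R) : R := PI * Rmin p (1/2).
Definition angle_r (p : R) : R := PI * Rmin (1 - p) (1/2).
Definition family (p : R) : list (turn * R) := family_at (angle_l p) (angle_r p).

Lemma family_angles p : 0 <= p <= 1 ->
  (0 <= angle_l p <= PI/2 /\ angle_r p = PI/2) \/
  (angle_l p = PI/2 /\ 0 <= angle_r p <= PI/2).
Proof.
  intros Hp. pose proof PI_RGT_0. unfold angle_l, angle_r.
  destruct (Rle_dec p (1/2)).
  - left. rewrite Rmin_left, Rmin_right by lra. split; [split|]; nra.
  - right. rewrite Rmin_right, Rmin_left by lra. split; [|split]; nra.
Qed.

Lemma family_at_nonneg a b : 0 <= a <= PI/2 -> 0 <= b <= PI/2 -> (a = PI/2 \/ b = PI/2) ->
  nonneg_lengths (family_at a b).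
Proof.
  intros Ha Hb Hab.
  pose proof (outer_seg_ge0 a Ha). pose proof (outer_seg_ge0 b Hb).
  pose proof (inner_seg_ge0 a Ha). pose proof (inner_seg_ge0 b Hb).
  assert (1 <= outer_seg a + outer_seg b).
  { destruct Hab as [-> | ->]; rewrite outer_seg_PI2; lra. }
  assert (PI/2 <= a + b) by (destruct Hab; lra).
  unfold nonneg_lengths, family_at.
  repeat (apply List.Forall_cons; [cbn; lra|]). apply List.Forall_nil.
Qed.

Lemma family_nonneg p : 0 <= p <= 1 -> nonneg_lengths (family p).
Proof.
  intros Hp. unfold family.
  destruct (family_angles p Hp) as [[Ha Hb] | [Ha Hb]];
    apply family_at_nonneg; auto; lra.
Qed.

Lemma family_endpoint p : 0 <= p <= 1 -> endpoint (family p) = (-2, 0).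
Proof.
  intros Hp. unfold family.
  destruct (family_angles p Hp) as [[Ha ->] | [-> Hb]];
    auto using endpoint_family_at_l, endpoint_family_at_r.
Qed.

Lemma family_at_total_turn a b : total_turn (family_at a b) = 0.
Proof. cbn [total_turn family_at curvature]. field. Qed.

Lemma family_at_total_length_pos a b : 0 <= a <= PI/2 -> 0 <= b <= PI/2 ->
  0 < total_length (family_at a b).
Proof.
  intros Ha Hb. pose proof PI2_1.
  pose proof (outer_seg_ge0 a Ha). pose proof (outer_seg_ge0 b Hb).
  pose proof (inner_seg_ge0 a Ha). pose proof (inner_seg_ge0 b Hb).
  cbn [total_length family_at]. lra.
Qed.

Lemma bcp_family p : 0 <= p <= 1 ->
  bcp (0, 0) (1, 0) (-2, 0) (1, 0) (total_length (family p)) (path (family p))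
      (tangent (family p)).
Proof.
  intros Hp. rewrite <- (family_endpoint p Hp).
  apply bcp_path; [apply family_nonneg, Hp | | apply family_at_total_turn].
  pose proof PI_RGT_0.
  destruct (family_angles p Hp) as [[Ha Hb] | [Ha Hb]];
    apply family_at_total_length_pos; lra.
Qed.

Lemma outer_seg_0 : outer_seg 0 = 0.
Proof. unfold outer_seg. rewrite cos_0, sin_0. field. Qed.

Lemma inner_seg_0 : inner_seg 0 = 2.
Proof. unfold inner_seg. rewrite cos_0, sin_0. field. Qed.

Definition rsl_pieces : list (turn * R) :=
  (TurnR, 3*(PI/2)) :: (Straight, 0) :: (TurnL, 0) :: (Straight, 2) ::
  (TurnL, 3*(PI/2)) :: (Straight, 0) :: (TurnL, 0) :: (Straight, 0) :: (TurnR, 0) :: nil.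

Definition lsr_pieces : list (turn * R) :=
  (TurnR, 0) :: (Straight, 0) :: (TurnL, 0) :: (Straight, 0) ::
  (TurnL, 3*(PI/2)) :: (Straight, 2) :: (TurnL, 0) :: (Straight, 0) :: (TurnR, 3*(PI/2)) :: nil.

Lemma family_0 : family 0 = rsl_pieces.
Proof.
  unfold family, family_at, angle_l, angle_r, rsl_pieces.
  rewrite Rmin_left, Rmin_right, Rmult_0_r by lra.
  replace (PI * (1/2)) with (PI/2) by field.
  rewrite outer_seg_0, outer_seg_PI2, inner_seg_0, inner_seg_PI2.
  repeat (apply f_equal2; [apply f_equal2; [reflexivity | field] |]); reflexivity.
Qed.

Lemma family_1 : family 1 = lsr_pieces.
Proof.
  unfold family, family_at, angle_l, angle_r, lsr_pieces.
  rewrite Rmin_right, Rminus_diag, Rmin_left, Rmult_0_r by lra.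
  replace (PI * (1/2)) with (PI/2) by field.
  rewrite outer_seg_0, outer_seg_PI2, inner_seg_0, inner_seg_PI2.
  repeat (apply f_equal2; [apply f_equal2; [reflexivity | field] |]); reflexivity.
Qed.

Lemma rot_cos_sin u a : rot u (cos a, sin a) = (cos (u + a), sin (u + a)).
Proof. unfold rot; cbn. rewrite cos_plus, sin_plus. f_equal; ring. Qed.

Ltac piece_side :=
  solve [ lra
        | unfold nonneg_lengths;
          repeat (apply List.Forall_cons; [cbn; lra|]); apply List.Forall_nil ].

Ltac eval_heading :=
  repeat first [ rewrite heading_cons_in by piece_side
               | rewrite heading_cons_ge by piece_side ];
  cbn [curvature].

Lemma rsl_pieces_RSL : is_RSL (total_length rsl_pieces) (tangent rsl_pieces).
Proof.
  pose proof PI_RGT_0. pose proof PI_4.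
  assert (Hlen : total_length rsl_pieces = 3*(PI/2) + 2 + 3*(PI/2))
    by (cbn; ring).
  exists (3*(PI/2)), 2, (3*(PI/2)).
  do 4 (split; [lra|]).
  unfold tangent, rsl_pieces in *. rewrite Hlen in *.
  split; [|split]; intros t Ht; unfold Icc in Ht; eval_heading.
  - rewrite Rmult_0_r, rot_cos_sin. f_equal; f_equal; ring.
  - assert (3*(PI/2) <= 3*(PI/2) <= 3*(PI/2) + 2) by lra. eval_heading.
    f_equal; f_equal; ring.
  - assert (3*(PI/2) <= 3*(PI/2) + 2) by lra. eval_heading.
    rewrite rot_cos_sin. f_equal; f_equal; ring.
Qed.

Lemma lsr_pieces_LSR : is_LSR (total_length lsr_pieces) (tangent lsr_pieces).
Proof.
  pose proof PI_RGT_0. pose proof PI_4.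
  assert (Hlen : total_length lsr_pieces = 3*(PI/2) + 2 + 3*(PI/2))
    by (cbn; ring).
  exists (3*(PI/2)), 2, (3*(PI/2)).
  do 4 (split; [lra|]).
  unfold tangent, lsr_pieces in *. rewrite Hlen in *.
  split; [|split]; intros t Ht; unfold Icc in Ht; eval_heading.
  - rewrite rot_cos_sin. f_equal; f_equal; ring.
  - assert (3*(PI/2) <= 3*(PI/2) <= 3*(PI/2) + 2) by lra. eval_heading.
    f_equal; f_equal; ring.
  - assert (3*(PI/2) <= 3*(PI/2) + 2) by lra. eval_heading.
    rewrite rot_cos_sin. f_equal; f_equal; ring.
Qed.

Definition vanishes_at (f : R -> R) (x : R) : Prop :=
  forall e, 0 < e -> exists d, 0 < d /\ forall p, Rabs (p - x) < d -> Rabs (f p) < e.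

Lemma vanishes_at_ext g f x : vanishes_at g x -> (forall p, g p = f p) -> vanishes_at f x.
Proof.
  intros Hg E e He. destruct (Hg e He) as [d [Hd H]].
  exists d; split; [exact Hd|]. intros p Hp. rewrite <- E. auto.
Qed.

Lemma vanishes_at_0 x : vanishes_at (fun _ => 0) x.
Proof. intros e He. exists 1. split; [lra|]. intros. rewrite Rabs_R0. exact He. Qed.

Lemma vanishes_at_plus f g x :
  vanishes_at f x -> vanishes_at g x -> vanishes_at (fun p => f p + g p) x.
Proof.
  intros Hf Hg e He.
  destruct (Hf (e / 2) ltac:(lra)) as [d1 [Hd1 H1]].
  destruct (Hg (e / 2) ltac:(lra)) as [d2 [Hd2 H2]].
  exists (Rmin d1 d2). split; [apply Rmin_pos; assumption|].
  intros p Hp. pose proof (Rmin_l d1 d2); pose proof (Rmin_r d1 d2).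
  eapply Rle_lt_trans; [apply Rabs_triang|].
  specialize (H1 p ltac:(lra)); specialize (H2 p ltac:(lra)). lra.
Qed.

Lemma vanishes_at_abs f x : vanishes_at f x -> vanishes_at (fun p => Rabs (f p)) x.
Proof.
  intros Hf e He. destruct (Hf e He) as [d [Hd H]].
  exists d; split; [exact Hd|]. intros p Hp. rewrite Rabs_Rabsolu. auto.
Qed.

Lemma vanishes_at_lipschitz f K x :
  0 <= K -> (forall p, Rabs (f p) <= K * Rabs (p - x)) -> vanishes_at f x.
Proof.
  intros HK Hf e He. exists (e / (K + 1)). split; [apply Rdiv_lt_0_compat; lra|].
  intros p Hp. eapply Rle_lt_trans; [apply Hf|].
  apply lt_of_mul_lt_div; auto using Rabs_pos.
Qed.

Lemma vanishes_at_scal c f x : vanishes_at f x -> vanishes_at (fun p => c * f p) x.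
Proof.
  intros Hf e He.
  destruct (Hf (e / (Rabs c + 1))) as [d [Hd H]].
  { pose proof (Rabs_pos c). apply Rdiv_lt_0_compat; lra. }
  exists d; split; [exact Hd|]. intros p Hp. rewrite Rabs_mult.
  apply lt_of_mul_lt_div; auto using Rabs_pos.
Qed.

Lemma vanishes_at_comp g f x : continuity_pt g (f x) ->
  vanishes_at (fun p => f p - f x) x -> vanishes_at (fun p => g (f p) - g (f x)) x.
Proof.
  intros Hg Hf e He. destruct (Hg e He) as [a [Ha H]].
  destruct (Hf a Ha) as [d [Hd H']]. exists d; split; [exact Hd|].
  intros p Hp. destruct (Req_dec (f p) (f x)) as [E|E].
  - rewrite E, Rminus_diag, Rabs_R0. exact He.
  - apply (H (f p)). split; [split; [exact I | auto] | apply H'; exact Hp].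
Qed.

Lemma Rmin_lipschitz a b c : Rabs (Rmin a c - Rmin b c) <= Rabs (a - b).
Proof.
  unfold Rmin. repeat destruct Rle_dec; unfold Rabs; repeat destruct Rcase_abs; lra.
Qed.

Lemma angle_l_vanishes x : vanishes_at (fun p => angle_l p - angle_l x) x.
Proof.
  pose proof PI_RGT_0. apply (vanishes_at_lipschitz _ PI); [lra|]. intros p.
  unfold angle_l. rewrite <- Rmult_minus_distr_l, Rabs_mult, Rabs_right by lra.
  apply Rmult_le_compat_l; [lra | apply Rmin_lipschitz].
Qed.

Lemma angle_r_vanishes x : vanishes_at (fun p => angle_r p - angle_r x) x.
Proof.
  pose proof PI_RGT_0. apply (vanishes_at_lipschitz _ PI); [lra|]. intros p.
  unfold angle_r. rewrite <- Rmult_minus_distr_l, Rabs_mult, Rabs_right by lra.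
  apply Rmult_le_compat_l; [lra|].
  eapply Rle_trans; [apply Rmin_lipschitz|].
  replace (1 - p - (1 - x)) with (- (p - x)) by ring. rewrite Rabs_Ropp. lra.
Qed.

Lemma outer_seg_continuous q : 0 <= q <= PI -> continuity_pt outer_seg q.
Proof.
  intros Hq. assert (0 <= sin q) by (apply sin_ge_0; lra).
  unfold outer_seg. reg. lra.
Qed.

Lemma inner_seg_continuous q : 0 <= q <= PI -> continuity_pt inner_seg q.
Proof.
  intros Hq. assert (0 <= sin q) by (apply sin_ge_0; lra).
  unfold inner_seg. reg. lra.
Qed.

Lemma vanishes_at_lincomb c1 c2 f g x :
  vanishes_at f x -> vanishes_at g x -> vanishes_at (fun p => c1 * f p + c2 * g p) x.
Proof. intros Hf Hg. apply vanishes_at_plus; apply vanishes_at_scal; assumption. Qed.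

Lemma length_dist_family_vanishes x : 0 <= x <= 1 ->
  vanishes_at (fun p => length_dist (family p) (family x)) x.
Proof.
  intros Hx.
  assert (Hrange : 0 <= angle_l x <= PI /\ 0 <= angle_r x <= PI).
  { pose proof PI_RGT_0. destruct (family_angles x Hx) as [[? ?]|[? ?]]; split; lra. }
  destruct Hrange as [Hl Hr].
  pose proof (angle_l_vanishes x) as Va. pose proof (angle_r_vanishes x) as Vb.
  pose proof (vanishes_at_comp _ _ x (outer_seg_continuous _ Hl) Va) as Oa.
  pose proof (vanishes_at_comp _ _ x (outer_seg_continuous _ Hr) Vb) as Ob.
  pose proof (vanishes_at_comp _ _ x (inner_seg_continuous _ Hl) Va) as Ia.
  pose proof (vanishes_at_comp _ _ x (inner_seg_continuous _ Hr) Vb) as Ib.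
  pose proof (vanishes_at_lincomb 1 1 _ _ x Va Vb) as Sab.
  pose proof (vanishes_at_lincomb 1 1 _ _ x Oa Ob) as Oab.
  unfold family, family_at. cbn [length_dist].
  repeat (apply vanishes_at_plus; [apply vanishes_at_abs|]); [..| apply vanishes_at_0].
  - apply (vanishes_at_ext _ _ x (vanishes_at_lincomb (-1) 2 _ _ x Va Vb)); intros; ring.
  - apply (vanishes_at_ext _ _ x Oab); intros; ring.
  - apply (vanishes_at_ext _ _ x Sab); intros; ring.
  - exact Ia.
  - apply (vanishes_at_ext _ _ x (vanishes_at_lincomb (-1) (-1) _ _ x Va Vb)); intros; ring.
  - exact Ib.
  - apply (vanishes_at_ext _ _ x Sab); intros; ring.
  - apply (vanishes_at_ext _ _ x Oab); intros; ring.
  - apply (vanishes_at_ext _ _ x (vanishes_at_lincomb 2 (-1) _ _ x Va Vb)); intros; ring.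
Qed.

Lemma family_C1_continuous p0 : 0 <= p0 <= 1 ->
  forall eps, 0 < eps -> exists delta, 0 < delta /\
    forall p, Icc 0 1 p -> Rabs (p - p0) < delta -> forall t, Icc 0 1 t ->
      vdist (path (family p) (total_length (family p) * t))
            (path (family p0) (total_length (family p0) * t)) < eps /\
      vdist (vscale (total_length (family p)) (tangent (family p) (total_length (family p) * t)))
            (vscale (total_length (family p0)) (tangent (family p0) (total_length (family p0) * t)))
        < eps.
Proof.
  intros Hp0 eps Heps.
  pose proof (total_length_ge0 _ (family_nonneg p0 Hp0)) as HL0.
  set (C := 2 * (1 + 2 * INR 9 * total_length (family p0))).
  assert (HC : 0 <= C) by (unfold C; pose proof (pos_INR 9); nra).
  destruct (length_dist_family_vanishes p0 Hp0 (eps / (C + 1)))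
    as [delta [Hdelta Hclose]]; [apply Rdiv_lt_0_compat; lra|].
  exists delta. split; [exact Hdelta|].
  intros p Hp Hpp0 t Ht.
  specialize (Hclose p Hpp0).
  pose proof (length_dist_ge0 (family p) (family p0)) as Hd.
  rewrite Rabs_right in Hclose by lra.
  pose proof (lt_of_mul_lt_div C eps _ HC Hd Hclose).
  destruct (path_C1_dist (family p) (family p0) t eq_refl
              (family_nonneg p Hp) (family_nonneg p0 Hp0) Ht) as [E1 E2].
  change (length (family p)) with 9%nat in E1, E2. fold C in E1, E2.
  split; lra.
Qed.

Theorem mainTheorem3 :
  exists (x X y Y : vec) (s1 : R) (g1 dg1 : R -> vec) (s2 : R) (g2 dg2 : R -> vec),
    bcp x X y Y s1 g1 dg1 /\ is_RSL s1 dg1 /\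
    bcp x X y Y s2 g2 dg2 /\ is_LSR s2 dg2 /\
    bounded_homotopic x X y Y s1 g1 dg1 s2 g2 dg2.
Proof.
  exists (0, 0), (1, 0), (-2, 0), (1, 0),
    (total_length (family 0)), (path (family 0)), (tangent (family 0)),
    (total_length (family 1)), (path (family 1)), (tangent (family 1)).
  split; [apply bcp_family; lra|].
  split; [rewrite family_0; exact rsl_pieces_RSL|].
  split; [apply bcp_family; lra|].
  split; [rewrite family_1; exact lsr_pieces_LSR|].
  exists (fun p => total_length (family p)), (fun p => path (family p)),
    (fun p => tangent (family p)).
  split; [exact bcp_family|].
  split; [exact family_C1_continuous|].
  repeat split.
Qed.
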